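(* Let $G$ be a group acting on posets $P$ and $Q$ by order-preserving bijections, and let $\varphi:P\to Q$ be an order-preserving $G$-map (i.e. $\varphi(gx)=g\varphi(x)$ for all $g\in G$, $x\in P$). Let $R\subset Q$ be a subset containing exactly one representative of each $G$-orbit of $Q$. Assume that for each $r\in R$ we are given a $G_r$-equivariant acyclic matching $M_r$ on the subposet $\varphi^{-1}(r)$ (on which the stabilizer $G_r=\{g\in G\mid gr=r\}$ acts), and let $C_r$ denote the set of critical elements of $M_r$. Then there exists a $G$-equivariant acyclic matching on $P$ whose set of critical elements is \[\bigcup_{g\in G,\ r\in R} gC_r .\] Moreover, if $r\in R$ is such that $G_r$ acts transitively on $C_r$, then $G$ acts transitively on $\bigcup_{g\in G} gC_r$.
   Context: For a poset $P$, a partial matching is a set $M$ of pairs $(a,b)$ of elements of $P$ such that $b$ covers $a$ (i.e. $a<b$ and there is no $c$ with $a<c<b$), and each element of $P$ lies in at most one pair of $M$. It is acyclic if there is no cycle $b_1>a_1<b_2>a_2<\dots<b_t>a_t<b_1$ with $t\ge 2$, the $b_i$ pairwise distinct and $(a_i,b_i)\in M$ for all $i$. The critical elements of $M$ are the elements of $P$ contained in no pair of $M$. If a group $H$ acts on $P$, a matching $M$ is $H$-equivariant if $(a,b)\in M$ implies $(ha,hb)\in M$ for all $h\in H$. *)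

From HB Require Import structures.
From mathcomp Require Import all_boot all_order.
Set Implicit Arguments. Unset Strict Implicit. Unset Printing Implicit Defensive.
Import Order.TTheory.
Local Open Scope order_scope.

Definition is_group (G : Type) (mul : G -> G -> G) (one : G) (inv : G -> G) : Prop :=
  [/\ forall a b c, mul a (mul b c) = mul (mul a b) c,
      forall a, mul one a = a &
      forall a, mul (inv a) a = one].

Definition is_action (G X : Type) (mul : G -> G -> G) (one : G) (act : G -> X -> X) : Prop :=
  (forall x, act one x = x) /\ (forall g h x, act (mul g h) x = act g (act h x)).

(* Each g acts by an order-preserving map (it is then automatically an
   order-preserving bijection, with inverse act (inv g)). *)
Definition order_preserving_action (G : Type) (d : Order.disp_t) (X : porderType d)
  (act : G -> X -> X) : Prop :=
  forall g (x y : X), x <= y -> act g x <= act g y.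

Definition covers_in (d : Order.disp_t) (P : porderType d) (S : P -> Prop) (a b : P) : Prop :=
  [/\ S a, S b, a < b & ~ (exists c, [/\ S c, a < c & c < b])].

Definition matching_on (d : Order.disp_t) (P : porderType d) (S : P -> Prop)
  (M : P -> P -> Prop) : Prop :=
  (forall a b, M a b -> covers_in S a b) /\
  (forall a b a' b', M a b -> M a' b' ->
     (a = a' \/ a = b' \/ b = a' \/ b = b') -> a = a' /\ b = b').

(* No cycle b_1 > a_1 < b_2 > a_2 < ... < b_t > a_t < b_1 with t >= 2,
   the b_i pairwise distinct and (a_i, b_i) in M (indices taken mod t,
   starting at 0). *)
Definition acyclic (d : Order.disp_t) (P : porderType d) (M : P -> P -> Prop) : Prop :=
  ~ (exists (t : nat) (a b : nat -> P),
       [/\ (2 <= t)%N,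
           forall i, (i < t)%N -> M (a i) (b i),
           forall i, (i < t)%N -> a i < b ((i.+1) %% t) &
           forall i j, (i < t)%N -> (j < t)%N -> b i = b j -> i = j]).

Definition acyclic_matching_on (d : Order.disp_t) (P : porderType d) (S : P -> Prop)
  (M : P -> P -> Prop) : Prop :=
  matching_on S M /\ acyclic M.

Definition critical (d : Order.disp_t) (P : porderType d) (S : P -> Prop)
  (M : P -> P -> Prop) (x : P) : Prop :=
  S x /\ ~ (exists y, M x y \/ M y x).

Definition equivariant (G X : Type) (act : G -> X -> X) (H : G -> Prop)
  (M : X -> X -> Prop) : Prop :=
  forall h a b, H h -> M a b -> M (act h a) (act h b).

(** The matching on P is obtained by spreading the fiber matchings over the
    G-orbits: (a, b) is matched iff some g translates it into a pair of some
    M_r.  Since every matched pair lies in a single fiber of phi and phi is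
    monotone, every cycle of the induced matching stays inside one fiber; a
    translate of it is then a cycle of the corresponding M_r.  Covering
    relations are checked in the fiber: anything strictly between two
    elements of a fiber lies in the same fiber. *)

From HB Require Import structures.
From mathcomp Require Import all_boot all_order.
Import Order.TTheory.
Local Open Scope order_scope.

Set Implicit Arguments.
Unset Strict Implicit.

Section GroupAction.

Variables (G : Type) (mul : G -> G -> G) (one : G) (inv : G -> G).
Hypothesis HG : is_group mul one inv.

Lemma mulgV (g : G) : mul g (inv g) = one.
Proof.
case: HG => mulA mul1g mulVg.
rewrite -[mul g (inv g)]mul1g -{1}(mulVg (inv g)) -mulA.
by rewrite (mulA (inv g) g (inv g)) mulVg mul1g mulVg.
Qed.

Variables (X : Type) (act : G -> X -> X).
Hypothesis Hact : is_action mul one act.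

Lemma actK (g : G) : cancel (act g) (act (inv g)).
Proof.
by case: HG => _ _ mulVg; case: Hact => act1 actM x; rewrite -actM mulVg act1.
Qed.

Lemma actKV (g : G) : cancel (act (inv g)) (act g).
Proof. by case: Hact => act1 actM x; rewrite -actM mulgV act1. Qed.

Lemma act_inj (g : G) : injective (act g).
Proof. exact: can_inj (actK g). Qed.

Lemma orbit_transitive (C : X -> Prop) :
  (forall c c', C c -> C c' -> exists g, act g c = c') ->
  forall x y,
    (exists g c, C c /\ x = act g c) -> (exists g c, C c /\ y = act g c) ->
    exists g, act g x = y.
Proof.
case: Hact => _ actM Htr x y [g1 [c1 [Cc1 ->]]] [g2 [c2 [Cc2 ->]]].
have [h <-] := Htr c1 c2 Cc1 Cc2.
by exists (mul g2 (mul h (inv g1))); rewrite !actM actK.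
Qed.

End GroupAction.

Lemma act_lt (G : Type) (mul : G -> G -> G) (one : G) (inv : G -> G)
    (d : Order.disp_t) (X : porderType d) (act : G -> X -> X) :
  is_group mul one inv -> is_action mul one act -> order_preserving_action act ->
  forall g (x y : X), x < y -> act g x < act g y.
Proof.
move=> HG Hact Hmono g x y; rewrite !lt_neqAle => /andP[neq_xy le_xy].
rewrite Hmono // andbT; apply: contra neq_xy.
by move=> /eqP/(act_inj HG Hact) ->.
Qed.

Lemma cyclic_chain_const (d : Order.disp_t) (T : porderType d) (t : nat)
    (f : nat -> T) :
  (0 < t)%N -> (forall i, (i < t)%N -> f i <= f (i.+1 %% t)) ->
  forall i, (i < t)%N -> f i = f 0.
Proof.
move=> t_gt0 step.
have chain j : (j < t)%N -> forall i, (i <= j)%N -> f i <= f j.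
  elim: j => [|j IHj] lt_jt i.
    by rewrite leqn0 => /eqP ->.
  rewrite leq_eqVlt ltnS => /orP[/eqP -> //| le_ij].
  apply: le_trans (IHj (ltnW lt_jt) i le_ij) _.
  by have := step j (ltnW lt_jt); rewrite modn_small.
have lt_last : (t.-1 < t)%N by rewrite prednK.
move=> i lt_it; apply/le_anti; rewrite (chain i lt_it 0) // andbT.
apply: le_trans (chain t.-1 lt_last i _) _; first by rewrite -ltnS prednK.
by have := step t.-1 lt_last; rewrite prednK // modnn.
Qed.

Section InducedMatching.

Variables (G : Type) (mul : G -> G -> G) (one : G) (inv : G -> G).
Hypothesis HG : is_group mul one inv.
Variables (dP dQ : Order.disp_t) (P : porderType dP) (Q : porderType dQ).
Variables (actP : G -> P -> P) (actQ : G -> Q -> Q).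
Hypotheses (HaP : is_action mul one actP) (HaQ : is_action mul one actQ).
Hypothesis HoP : order_preserving_action actP.
Variable phi : P -> Q.
Hypothesis Hphi_mono : forall x y : P, x <= y -> phi x <= phi y.
Hypothesis Hphi_equiv : forall g (x : P), phi (actP g x) = actQ g (phi x).
Variable R : Q -> Prop.
Hypothesis HR_exists : forall q : Q, exists r, R r /\ exists g, actQ g r = q.
Hypothesis HR_unique :
  forall r r' : Q, R r -> R r' -> (exists g, actQ g r = r') -> r = r'.
Variable M : Q -> P -> P -> Prop.
Hypothesis HM : forall r, R r ->
  acyclic_matching_on (fun x => phi x = r) (M r) /\
  equivariant actP (fun g => actQ g r = r) (M r).

Definition induced_matching (a b : P) : Prop :=
  exists g r a' b', [/\ R r, M r a' b', a = actP g a' & b = actP g b'].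

Lemma fiber_matching_covers r a b :
  R r -> M r a b -> covers_in (fun x => phi x = r) a b.
Proof. by move=> Rr; have [[[Mcov _] _] _] := HM Rr; apply: Mcov. Qed.

Lemma induced_matching_fiber a b : induced_matching a b -> phi a = phi b.
Proof.
move=> [g [r [a' [b' [Rr Mab -> ->]]]]].
by have [phi_a' phi_b' _ _] := fiber_matching_covers Rr Mab;
  rewrite !Hphi_equiv phi_a' phi_b'.
Qed.

(* The representative r of the orbit of phi a is unique, so the pair
   translated by inv g lies in M r itself, not merely in a translate. *)
Lemma induced_matching_translate a b r g :
  induced_matching a b -> R r -> actQ g r = phi a ->
  M r (actP (inv g) a) (actP (inv g) b).
Proof.
have [[_ actPM] [_ actQM]] := (HaP, HaQ).
move=> [g' [r' [a' [b' [Rr' Mab -> ->]]]]] Rr Hg.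
have [phi_a' _ _ _] := fiber_matching_covers Rr' Mab.
rewrite Hphi_equiv phi_a' in Hg.
have stab : actQ (mul (inv g) g') r' = r by rewrite actQM -Hg (actK HG HaQ).
have er : r' = r by apply: HR_unique => //; exists (mul (inv g) g').
rewrite er in stab Mab; have := (HM Rr).2 _ a' b' stab Mab.
by rewrite !actPM.
Qed.

Lemma induced_matching_covers a b :
  induced_matching a b -> covers_in (fun _ => True) a b.
Proof.
move=> Mab; have [r [Rr [g Hg]]] := HR_exists (phi a).
have [_ _ lt_ab nothing_between] :=
  fiber_matching_covers Rr (induced_matching_translate Mab Rr Hg).
have lt_act := act_lt HG HaP HoP.
split => //; first by rewrite -(actKV HG HaP g a) -(actKV HG HaP g b) lt_act.
move=> [c [_ lt_ac lt_cb]]; apply: nothing_between.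
exists (actP (inv g) c); split; last 2 first; [exact: lt_act | exact: lt_act |].
have phi_c : phi c = phi a.
  apply/le_anti; rewrite (Hphi_mono (ltW lt_ac)) andbT (induced_matching_fiber Mab).
  exact: Hphi_mono (ltW lt_cb).
by rewrite Hphi_equiv phi_c -Hg (actK HG HaQ).
Qed.

Lemma induced_matching_unique a b a' b' :
  induced_matching a b -> induced_matching a' b' ->
  (a = a' \/ a = b' \/ b = a' \/ b = b') -> a = a' /\ b = b'.
Proof.
move=> Mab Mab' overlap.
have e : phi a' = phi a.
  have := induced_matching_fiber Mab; have := induced_matching_fiber Mab'.
  by case: overlap => [e|[e|[e|e]]]; congruence.
have [r [Rr [g Hg]]] := HR_exists (phi a).
have M1 := induced_matching_translate Mab Rr Hg.
have M2 := induced_matching_translate Mab' Rr (etrans Hg (esym e)).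
have [[_ fiber_unique] _] := (HM Rr).1.
have [e1 e2] :
    actP (inv g) a = actP (inv g) a' /\ actP (inv g) b = actP (inv g) b'.
  by apply: fiber_unique M1 M2 _; case: overlap => [->|[->|[->|->]]]; tauto.
by split; [exact: (act_inj HG HaP e1) | exact: (act_inj HG HaP e2)].
Qed.

Lemma induced_matching_acyclic : acyclic induced_matching.
Proof.
move=> [t [a [b [t_ge2 Mab lt_ab dist_b]]]].
have t_gt0 : (0 < t)%N by apply: leq_trans t_ge2.
have fiber_a : forall i, (i < t)%N -> phi (a i) = phi (a 0).
  apply: (@cyclic_chain_const _ _ t (fun i => phi (a i)) t_gt0) => j lt_jt.
  rewrite (induced_matching_fiber (Mab _ (ltn_pmod _ t_gt0))).
  exact: Hphi_mono (ltW (lt_ab j lt_jt)).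
have [r [Rr [g Hg]]] := HR_exists (phi (a 0)).
apply: (HM Rr).1.2.
exists t, (fun i => actP (inv g) (a i)), (fun i => actP (inv g) (b i)).
split => // [i lt_it|i lt_it|i j lt_it lt_jt].
- by apply: induced_matching_translate => //; [apply: Mab | rewrite fiber_a].
- exact: (act_lt HG HaP HoP (inv g) (lt_ab i lt_it)).
- by move/(act_inj HG HaP); apply: dist_b.
Qed.

Lemma induced_matching_equivariant :
  equivariant actP (fun _ => True) induced_matching.
Proof.
case: HaP => _ actPM h a b _ [g [r [a' [b' [Rr Mab -> ->]]]]].
by exists (mul h g), r, a', b'; split; rewrite ?actPM.
Qed.

Lemma critical_induced_matching x :
  critical (fun _ => True) induced_matching x <->
  exists g r c, [/\ R r, critical (fun y => phi y = r) (M r) c & x = actP g c].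
Proof.
split.
  move=> [_ x_free]; have [r [Rr [g Hg]]] := HR_exists (phi x).
  exists g, r, (actP (inv g) x); split; [done| |by rewrite (actKV HG HaP)].
  split; first by rewrite Hphi_equiv -Hg (actK HG HaQ).
  move=> [y [My|My]]; apply: x_free; exists (actP g y); [left | right].
  - by exists g, r, (actP (inv g) x), y; split; rewrite ?(actKV HG HaP).
  - by exists g, r, y, (actP (inv g) x); split; rewrite ?(actKV HG HaP).
move=> [g [r [c [Rr [phi_c c_free] ->]]]]; split => //.
have Hg : actQ g r = phi (actP g c) by rewrite Hphi_equiv phi_c.
move=> [y [My|My]]; apply: c_free; exists (actP (inv g) y); [left | right].
- by have := induced_matching_translate My Rr Hg; rewrite (actK HG HaP).
- have := induced_matching_translate My Rr
    (etrans Hg (esym (induced_matching_fiber My))).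
  by rewrite (actK HG HaP).
Qed.

End InducedMatching.

Theorem proposition6
  (G : Type) (mul : G -> G -> G) (one : G) (inv : G -> G)
  (HG : is_group mul one inv)
  (dP dQ : Order.disp_t) (P : porderType dP) (Q : porderType dQ)
  (actP : G -> P -> P) (actQ : G -> Q -> Q)
  (HaP : is_action mul one actP) (HaQ : is_action mul one actQ)
  (HoP : order_preserving_action actP) (HoQ : order_preserving_action actQ)
  (phi : P -> Q)
  (Hphi_mono : forall x y : P, x <= y -> phi x <= phi y)
  (Hphi_equiv : forall g (x : P), phi (actP g x) = actQ g (phi x))
  (R : Q -> Prop)
  (HR_exists : forall q : Q, exists r, R r /\ exists g, actQ g r = q)
  (HR_unique : forall r r' : Q, R r -> R r' -> (exists g, actQ g r = r') -> r = r')
  (M : Q -> P -> P -> Prop)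
  (HM : forall r, R r ->
     acyclic_matching_on (fun x => phi x = r) (M r) /\
     equivariant actP (fun g => actQ g r = r) (M r)) :
  (exists MP : P -> P -> Prop,
     [/\ acyclic_matching_on (fun _ => True) MP,
         equivariant actP (fun _ => True) MP &
         forall x : P,
           critical (fun _ => True) MP x <->
           exists g r c, [/\ R r, critical (fun y => phi y = r) (M r) c & x = actP g c]])
  /\
  (forall r, R r ->
     (forall c c', critical (fun y => phi y = r) (M r) c ->
                   critical (fun y => phi y = r) (M r) c' ->
                   exists g, actQ g r = r /\ actP g c = c') ->
     forall x y,
       (exists g c, critical (fun z => phi z = r) (M r) c /\ x = actP g c) ->
       (exists g c, critical (fun z => phi z = r) (M r) c /\ y = actP g c) ->
       exists g, actP g x = y).
Proof.
split.
  exists (induced_matching actP R M); split.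
  - split; first split.
    + exact: (induced_matching_covers HG HaP HaQ HoP Hphi_mono Hphi_equiv
        HR_exists HR_unique HM).
    + exact: (induced_matching_unique HG HaP HaQ Hphi_equiv HR_exists HR_unique HM).
    + exact: (induced_matching_acyclic HG HaP HaQ HoP Hphi_mono Hphi_equiv
        HR_exists HR_unique HM).
  - exact: (induced_matching_equivariant HaP).
  - exact: (critical_induced_matching HG HaP HaQ Hphi_equiv HR_exists HR_unique HM).
move=> r _ Htr; apply: (orbit_transitive HG HaP) => c c' Cc Cc'.
by have [g [_ <-]] := Htr c c' Cc Cc'; exists g.
Qed.
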